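(* For every $k\ge1$ one has the following equalities of row vectors (of length $k+1$) of power series in $t$: $$\Big(\sum_{n\ge0}\#_{\mathcal B}\{(0,0)\xrightarrow{n}(k-i,i)\}t^n\Big)_{0\le i\le k}=t^k\,B_2F_2B_3F_3\cdots B_{k+1}F_{k+1},$$ $$\Big(\sum_{n\ge0}\#_{\mathcal D}\{(0,0)\xrightarrow{n}(k-i,i)\}t^n\Big)_{0\le i\le k}=t^k\,D_2F_2D_3F_3\cdots D_{k+1}F_{k+1}.$$
   Context: Let $\mathbb N=\{0,1,2,\dots\}$, $\mathcal B=\{(-1,1),(0,1),(1,0),(1,-1)\}$, $\mathcal D=\{(-1,1),(0,1),(1,-1)\}$. For a step set $\mathcal S$, $\#_{\mathcal S}\{(0,0)\xrightarrow{n}(i,j)\}$ is the number of sequences $p_0=(0,0),p_1,\dots,p_n=(i,j)$ of points of $\mathbb N^2$ with $p_m-p_{m-1}\in\mathcal S$. For $n\ge2$, $F_n\in\mathcal M_{n,n}(\mathbb R(t))$ is the inverse of the $n\times n$ tridiagonal matrix with all diagonal entries equal to $1$ and all entries immediately above and below the diagonal equal to $-t$ (other entries $0$); its entries are rational functions, regular at $t=0$, identified with their power series expansions in $t$. For $n\ge2$, $D_n\in\mathcal M_{n-1,n}(\mathbb R)$ is the matrix with entries $(D_n)_{r,r+1}=1$ for $1\le r\le n-1$ and all other entries $0$, and $B_n\in\mathcal M_{n-1,n}(\mathbb R)$ is the matrix with entries $(B_n)_{r,r}=(B_n)_{r,r+1}=1$ for $1\le r\le n-1$ and all other entries $0$.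 Vector and matrix rows/columns are indexed so that index $i$ (starting from $0$) corresponds to the point $(k-i,i)$. *)

From HB Require Import structures.
From mathcomp Require Import all_boot all_order all_algebra.
From mathcomp Require Import fraction.
From mathcomp Require Import reals.
Set Implicit Arguments. Unset Strict Implicit. Unset Printing Implicit Defensive.
Import Order.TTheory GRing.Theory Num.Theory.
Local Open Scope ring_scope.

Definition stepsB : seq (int * int) := [:: (-1, 1); (0, 1); (1, 0); (1, -1)]%R.
Definition stepsD : seq (int * int) := [:: (-1, 1); (0, 1); (1, -1)]%R.

Definition wpos (S : seq (int * int)) (n : nat) (w : {ffun 'I_n -> 'I_(size S)})
  (m : nat) : int * int :=
  ((\sum_(j < n | (j < m)%N) (nth (0, 0) S (w j)).1),
   (\sum_(j < n | (j < m)%N) (nth (0, 0) S (w j)).2)).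

(* #_S{(0,0) --n--> (x,y)}: number of n-step walks with steps in S,
   staying in N^2 (all points p_0,...,p_n), ending at (x,y). *)
Definition nwalks (S : seq (int * int)) (n x y : nat) : nat :=
  #|[set w : {ffun 'I_n -> 'I_(size S)} |
     [forall m : 'I_n.+1, (0 <= (wpos w m).1) && (0 <= (wpos w m).2)]
     && (wpos w n == (x%:Z, y%:Z))]|.

Section Mats.
Variable R : realType.

Definition Rt := {fraction {poly R}}.
Definition tfrac (p : {poly R}) : Rt := FracField.tofrac p.
Definition tt : Rt := tfrac 'X.

Definition Tmx (n : nat) : 'M[Rt]_n :=
  \matrix_(i < n, j < n)
    (if i == j :> nat then 1
     else if ((i.+1 == j) || (j.+1 == i))%N then - tt else 0).

Definition Fmx (n : nat) : 'M[Rt]_n := invmx (Tmx n).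

(* B_n, D_n for n = m+2, of size (n-1) x n, 0-indexed *)
Definition Bmx (m : nat) : 'M[Rt]_(m.+1, m.+2) :=
  \matrix_(r < m.+1, c < m.+2) (if (c == r :> nat) || (c == r.+1 :> nat) then 1 else 0).
Definition Dmx (m : nat) : 'M[Rt]_(m.+1, m.+2) :=
  \matrix_(r < m.+1, c < m.+2) (if c == r.+1 :> nat then 1 else 0).

(* Pprod X k = X_2 F_2 X_3 F_3 ... X_{k+1} F_{k+1} (empty product for k = 0) *)
Fixpoint Pprod (X : forall m, 'M[Rt]_(m.+1, m.+2)) (k : nat) : 'rV[Rt]_(k.+1) :=
  match k with
  | 0 => 1%:M
  | m.+1 => Pprod X m *m X m *m Fmx m.+2
  end.

(* r in R(t) is regular at t = 0 and its power series expansion is a *)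
Definition expands_to (r : Rt) (a : nat -> R) : Prop :=
  exists p q : {poly R}, q`_0 != 0 /\ r = tfrac p / tfrac q /\
    forall m : nat, \sum_(j < m.+1) q`_j * a (m - j)%N = p`_m.

End Mats.

From HB Require Import structures.
From mathcomp Require Import all_boot all_order all_algebra.
From mathcomp Require Import fraction reals.
From mathcomp Require Import zify ring.
Set Implicit Arguments. Unset Strict Implicit. Unset Printing Implicit Defensive.
Import Order.TTheory GRing.Theory Num.Theory.
Local Open Scope ring_scope.

(* Group the points of N^2 by level x + y. The steps (1,-1) and (-1,1) keep the level and
   the other steps raise it by one, so the row a_m(t) of generating functions of walks
   ending on level m, indexed by the ordinate, satisfies a_(m+1) = t (a_(m+1) U + a_m X),
   where U is the tridiagonal 0/1 matrix and X is B_(m+2) or D_(m+2). Since 1 - tU is the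
   matrix inverted by F_(m+2), this gives a_(m+1) = t a_m X F_(m+2), starting from a_0 = 1.
   Power series are handled through their truncations modulo t^N, and F through
   adj(1 - tU) / det(1 - tU), where det(1 - tU) has constant term 1. *)

Section Walks.
Variable S : seq (int * int).

Local Notation walk n := {ffun 'I_n -> 'I_(size S)}.

Definition step (c : 'I_(size S)) : int * int := nth (0, 0) S c.

Definition in_quadrant (p : int * int) : bool := (0 <= p.1) && (0 <= p.2).

Definition walk_to n (p : int * int) (w : walk n) : bool :=
  [forall m : 'I_n.+1, in_quadrant (wpos w m)] && (wpos w n == p).

Definition nwalks_to n (p : int * int) : nat := #|[set w : walk n | walk_to p w]|.

Lemma nwalksE n (x y : nat) : nwalks S n x y = nwalks_to n (x%:Z, y%:Z).
Proof. by []. Qed.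

Lemma wposE n (w : walk n) m : wpos w m = \sum_(j < n | (j < m)%N) step (w j).
Proof.
by rewrite [RHS]surjective_pairing;
  congr pair; symmetry; apply: big_morph => // [[? ?] [? ?]].
Qed.

Lemma widen_lift n (j : 'I_n) : widen_ord (leqnSn n) j = lift ord_max j.
Proof. exact/val_inj/esym/lift_max. Qed.

Definition wsnoc n (w : walk n) (c : 'I_(size S)) : walk n.+1 :=
  [ffun j => if unlift ord_max j is Some j' then w j' else c].

Definition wbehead n (w : walk n.+1) : walk n := [ffun j => w (lift ord_max j)].

Lemma wbeheadK n (w : walk n.+1) : wsnoc (wbehead w) (w ord_max) = w.
Proof. by apply/ffunP => j; rewrite ffunE; case: unliftP => [j'|] -> //; rewrite ffunE. Qed.

Lemma wsnocK n (w : walk n) c : wbehead (wsnoc w c) = w.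
Proof. by apply/ffunP => j; rewrite !ffunE liftK. Qed.

Lemma wsnoc_last n (w : walk n) c : wsnoc w c ord_max = c.
Proof. by rewrite ffunE unlift_none. Qed.

Lemma wpos_wsnoc n (w : walk n) c m :
  wpos (wsnoc w c) m = if (m <= n)%N then wpos w m else wpos w n + step c.
Proof.
rewrite !wposE big_mkcond big_ord_recr /= wsnoc_last.
under eq_bigr => j _ do rewrite ffunE widen_lift liftK.
rewrite -big_mkcond; case: leqP => [_ | lt_nm]; first by rewrite addr0.
by congr (_ + _); apply: eq_bigl => j; rewrite ltn_ord (ltn_trans _ lt_nm).
Qed.

Lemma walk_to_wsnoc n p (w : walk n) c :
  walk_to p (wsnoc w c) = in_quadrant p && walk_to (p - step c) w.
Proof.
rewrite /walk_to; have -> : [forall m : 'I_n.+2, in_quadrant (wpos (wsnoc w c) m)] =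
          [forall m : 'I_n.+1, in_quadrant (wpos w m)] && in_quadrant (wpos w n + step c).
  apply/forallP/andP => [inq | [/forallP inq inq_last] m].
    split; last by have := inq ord_max; rewrite wpos_wsnoc ltnn.
    apply/forallP => m; have := inq (lift ord_max m).
    by rewrite wpos_wsnoc lift_max -ltnS ltn_ord.
  by rewrite wpos_wsnoc; case: leqP => // le_mn; apply: (inq (Ordinal (le_mn : m < n.+1)%N)).
rewrite wpos_wsnoc ltnn (can2_eq (addrK _) (subrK _)).
by case: eqVneq => [->|]; rewrite ?subrK ?andbT ?andbF // andbC.
Qed.

Lemma nwalks_to_S n p :
  nwalks_to n.+1 p = if in_quadrant p then (\sum_(c <- S) nwalks_to n (p - c)%R)%N else 0%N.
Proof.
rewrite /nwalks_to -sum1_card (partition_big (fun w : walk n.+1 => w ord_max) predT) //=.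
rewrite (big_nth (0, 0)) big_mkord; case: ifP => inq; last first.
  apply: big1 => c _; apply: big1 => w /andP[]; rewrite inE => + /eqP wc.
  by rewrite -(wbeheadK w) wc walk_to_wsnoc inq.
apply: eq_bigr => c _.
rewrite (reindex_onto (fun w : walk n => wsnoc w c) (@wbehead n)) /=; last first.
  by move=> w /andP[_ /eqP <-]; apply: wbeheadK.
rewrite -sum1_card; apply: eq_bigl => w.
by rewrite !inE walk_to_wsnoc inq wsnocK wsnoc_last !eqxx !andbT.
Qed.

Lemma nwalks_to0 p : nwalks_to 0 p = (p == 0).
Proof.
have wpos0 (w : walk 0) m : wpos w m = 0 by rewrite wposE big_ord0.
rewrite /nwalks_to; case: eqVneq => [-> | ne].
  have -> : [set w : walk 0 | walk_to 0 w] = setT.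
    apply/setP => w; rewrite !inE /walk_to wpos0 eqxx andbT.
    by apply/forallP => m; rewrite wpos0.
  by rewrite cardsT card_ffun (card_ord 0) expn0.
apply/eqP; rewrite cards_eq0; apply/eqP/setP => w.
by rewrite !inE /walk_to wpos0 eq_sym (negbTE ne) andbF.
Qed.

Lemma nwalks_to_out n p : ~~ in_quadrant p -> nwalks_to n p = 0%N.
Proof.
move=> outp; apply/eqP; rewrite cards_eq0; apply/eqP/setP => w; rewrite !inE.
by apply: contraNF outp => /andP[/forallP/(_ ord_max) + /eqP <-].
Qed.

Definition nwalks_level n (m j : int) : nat := nwalks_to n (m - j, j).

Lemma in_quadrant_level (m j : int) : in_quadrant (m - j, j) = (0 <= j <= m).
Proof. by rewrite /in_quadrant subr_ge0 andbC. Qed.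

Lemma nwalks_level_out n m j : ~~ (0 <= j <= m) -> nwalks_level n m j = 0%N.
Proof. by rewrite -in_quadrant_level; apply: nwalks_to_out. Qed.

Lemma nwalks_level0 m j : nwalks_level 0 m j = (m == 0) && (j == 0).
Proof.
rewrite /nwalks_level nwalks_to0 xpair_eqE andbC.
by case: (eqVneq j 0) => [->|]; rewrite ?subr0 ?andbT ?andbF.
Qed.

Lemma nwalks_level_S n m j :
  nwalks_level n.+1 m j = if 0 <= j <= m then
    (\sum_(c <- S) nwalks_level n (m - (c.1 + c.2))%R (j - c.2)%R)%N else 0%N.
Proof.
rewrite /nwalks_level nwalks_to_S in_quadrant_level; case: ifP => // _.
by apply: eq_bigr => -[a b] _; congr (nwalks_to _ (_, _)) => /=; lia.
Qed.

End Walks.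

(* The offsets -1 and 1 come from the level-preserving steps (-1,1) and (1,-1); s lists the
   offsets -b of the level-raising steps (a, b). *)
Definition level_recurrence (S : seq (int * int)) (s : seq int) : Prop :=
  forall n m j, 0 <= j <= m -> nwalks_level S n.+1 m j =
    (\sum_(d <- [:: -1; 1]%R) nwalks_level S n m (j + d)
     + \sum_(d <- s) nwalks_level S n (m - 1) (j + d))%N.

Lemma level_recurrence_stepsB : level_recurrence stepsB [:: 0; -1].
Proof.
move=> n m j jm; rewrite nwalks_level_S jm !big_cons !big_nil /=.
rewrite addNr subrr add0r !addr0 opprK !addn0 -!addnA; congr addn.
by rewrite addnC -addnA addnCA.
Qed.

Lemma level_recurrence_stepsD : level_recurrence stepsD [:: -1].
Proof.
move=> n m j jm; rewrite nwalks_level_S jm !big_cons !big_nil /=.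
rewrite addNr subrr add0r !addr0 opprK !addn0 -addnA; congr addn; exact: addnC.
Qed.

Section BandMatrix.
Variable R : pzRingType.

Definition bandmx p q (s : seq int) : 'M[R]_(p, q) := \matrix_(i, j) (i%:Z - j%:Z \in s)%:R.
Arguments bandmx {p q} s.

Lemma uniq_mem_sum (T : eqType) (s : seq T) x :
  uniq s -> (x \in s)%:R = \sum_(d <- s) (x == d)%:R :> R.
Proof.
move=> s_uniq; rewrite -count_uniq_mem // -sum1_count big_mkcond natr_sum.
by apply: eq_bigr => d _; rewrite /= eq_sym; case: eqP.
Qed.

Lemma sum_ord_pick p (F : int -> R) (x : int) :
  \sum_(i < p) F i * (i%:Z == x)%:R = if (0 <= x) && (x < p%:Z) then F x else 0.
Proof.
case: x => [n | n]; last by apply: big1 => i _; rewrite mulr0.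
under eq_bigr do rewrite eqz_nat.
rewrite le0z_nat ltz_nat /=.
case: ltnP => [lt_np | le_pn]; last first.
  by apply: big1 => i _; rewrite ltn_eqF ?mulr0 // (leq_trans (ltn_ord i)).
rewrite (bigD1 (Ordinal lt_np)) //= eqxx mulr1 big1 ?addr0 // => i.
by rewrite -val_eqE /= => /negbTE ->; rewrite mulr0.
Qed.

Lemma mul_row_bandmx p q s (f : int -> R) (j : 'I_q) : uniq s ->
  (forall i : int, ~~ ((0 <= i) && (i < p%:Z)) -> f i = 0) ->
  (\row_(i < p) f i *m bandmx s : 'rV_q) 0 j = \sum_(d <- s) f (j%:Z + d).
Proof.
move=> s_uniq f_out; rewrite mxE.
under eq_bigr do rewrite !mxE uniq_mem_sum // mulr_sumr.
rewrite exchange_big /=; apply: eq_bigr => d _.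
under eq_bigr do rewrite subr_eq addrC.
rewrite sum_ord_pick.
by case: ifPn => // /f_out ->.
Qed.

End BandMatrix.
Arguments bandmx {R p q} s.

Section CongruenceModX.
Variable R : comNzRingType.

Definition eqmodX N p q (A B : 'M[{poly R}]_(p, q)) : Prop := exists C, A - B = 'X^N *: C.

Lemma eqmodX_trans N p q (A B C : 'M_(p, q)) : eqmodX N A B -> eqmodX N B C -> eqmodX N A C.
Proof. by move=> [D eqD] [E eqE]; exists (D + E); rewrite scalerDr -eqD -eqE addrA subrK. Qed.

Lemma eqmodX_mulmxr N p q r (A B : 'M_(p, q)) (M : 'M_(q, r)) :
  eqmodX N A B -> eqmodX N (A *m M) (B *m M).
Proof. by move=> [C eqC]; exists (C *m M); rewrite -mulmxBl eqC scalemxAl. Qed.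

Lemma eqmodX_scale N p q (A B : 'M_(p, q)) c : eqmodX N A B -> eqmodX N (c *: A) (c *: B).
Proof. by move=> [C eqC]; exists (c *: C); rewrite -scalerBr eqC !scalerA mulrC. Qed.

Lemma coef_eqmodX N p q (A B : 'M_(p, q)) i j n :
  eqmodX N A B -> (n < N)%N -> (A i j)`_n = (B i j)`_n.
Proof.
move=> [C eqC] lt_nN; have := congr1 (fun M : 'M[{poly R}]_(p, q) => (M i j)`_n) eqC.
by rewrite /= !mxE coefB coefXnM lt_nN => /eqP; rewrite subr_eq0 => /eqP.
Qed.

End CongruenceModX.

Section TridiagonalPoly.
Variable R : comNzRingType.

Definition Tpoly n : 'M[{poly R}]_n := 1%:M - 'X *: bandmx [:: -1; 1].

Lemma coef0_det_Tpoly n : (\det (Tpoly n))`_0 = 1.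
Proof.
rewrite -horner_coef0 -horner_evalE -det_map_mx map_mxB map_mx1 map_mxZ /=.
by rewrite horner_evalE hornerX scale0r subr0 det1.
Qed.

End TridiagonalPoly.
Arguments Tpoly {R} n.
Arguments coef0_det_Tpoly {R} n.

Section RationalFunctions.
Variable R : realType.
Local Notation tofrac := (@FracField.tofrac {poly R}).

Lemma Tmx_Tpoly n : Tmx R n = map_mx tofrac (Tpoly n).
Proof.
apply/matrixP => i j; rewrite !mxE rmorphB rmorphM !rmorph_nat -val_eqE /=.
have -> : (i%:Z - j%:Z \in [:: -1; 1]) = (i.+1 == j) || (j.+1 == i) by rewrite !inE; lia.
have [-> | _] := eqVneq (i : nat) j; first by rewrite (gtn_eqF (ltnSn j)) mulr0 subr0.
by rewrite sub0r; case: ifP => _; rewrite ?mulr1 ?mulr0 ?oppr0.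
Qed.

Lemma Bmx_bandmx m : Bmx R m = map_mx tofrac (bandmx [:: 0; -1]).
Proof.
apply/matrixP => i j; rewrite !mxE rmorph_nat.
have -> : (i%:Z - j%:Z \in [:: 0; -1]) = (j == i :> nat) || (j == i.+1 :> nat).
  by rewrite !inE; lia.
by case: ifP.
Qed.

Lemma Dmx_bandmx m : Dmx R m = map_mx tofrac (bandmx [:: -1]).
Proof.
apply/matrixP => i j; rewrite !mxE rmorph_nat.
have -> : (i%:Z - j%:Z \in [:: -1]) = (j == i.+1 :> nat) by rewrite !inE; lia.
by case: ifP.
Qed.

Lemma tofrac_det_Tpoly_neq0 n : tofrac (\det (Tpoly n)) != 0.
Proof.
rewrite tofrac_eq0; apply: contra_neq (oner_neq0 R) => det0.
by rewrite -(coef0_det_Tpoly n) det0 coef0.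
Qed.

Lemma Fmx_adj n : Fmx R n = (tofrac (\det (Tpoly n)))^-1 *: map_mx tofrac (\adj (Tpoly n)).
Proof.
have Tunit : map_mx tofrac (Tpoly n) \in unitmx.
  by rewrite unitmxE det_map_mx unitfE tofrac_det_Tpoly_neq0.
by rewrite /Fmx Tmx_Tpoly /invmx Tunit map_mx_adj det_map_mx.
Qed.

End RationalFunctions.

Section PprodFraction.
Variables (R : realType) (s : seq int).
Local Notation tofrac := (@FracField.tofrac {poly R}).

Fixpoint Pden n : {poly R} := if n is m.+1 then Pden m * \det (Tpoly m.+2) else 1.

Fixpoint Pnum n : 'rV[{poly R}]_n.+1 :=
  if n is m.+1 then 'X *: (Pnum m *m bandmx s *m \adj (Tpoly m.+2)) else 1%:M.

Lemma coef0_Pden n : (Pden n)`_0 = 1.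
Proof. by elim: n => [|n IHn] /=; rewrite ?coef1 // coef0M IHn coef0_det_Tpoly mulr1. Qed.

Lemma Pprod_frac (X : forall m, 'M[Rt R]_(m.+1, m.+2)) :
    (forall m, X m = map_mx tofrac (bandmx s)) ->
  forall n, tt R ^+ n *: Pprod X n = (tofrac (Pden n))^-1 *: map_mx tofrac (Pnum n).
Proof.
move=> X_band; elim => [|n IHn] /=.
  by rewrite expr0 scale1r rmorph1 invr1 scale1r map_mx1.
rewrite exprS -scalerA -mulmxA (scalemxAl (tt R ^+ n)) mulmxA.
rewrite IHn X_band Fmx_adj map_mxZ !map_mxM -!scalemxAl -!scalemxAr !scalerA.
rewrite rmorphM invfM /tt /tfrac; congr (_ *: _); ring.
Qed.

End PprodFraction.
Arguments Pden {R} n.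
Arguments Pnum {R} s n.

Section GeneratingFunction.
Variables (R : realType) (S : seq (int * int)) (s : seq int).
Hypotheses (s_uniq : uniq s) (S_rec : level_recurrence S s).

Definition level_gf m N : 'rV[{poly R}]_m.+1 :=
  \row_(i < m.+1) \poly_(n < N) (nwalks_level S n m i)%:R.

Lemma level_gf_entry_out N (m j : int) :
  ~~ (0 <= j <= m) -> \poly_(n < N) (nwalks_level S n m j)%:R = 0 :> {poly R}.
Proof.
by move=> out; apply/polyP => n; rewrite coef_poly coef0 nwalks_level_out // if_same.
Qed.

Lemma mul_level_gf_bandmx m N q (s' : seq int) (j : 'I_q) : uniq s' ->
  (level_gf m N *m bandmx s') 0 j =
    \sum_(d <- s') \poly_(n < N) (nwalks_level S n m (j%:Z + d))%:R.
Proof.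
move=> s'_uniq.
rewrite (mul_row_bandmx (f := fun i => \poly_(n < N) (nwalks_level S n m i)%:R)) // => i out.
by apply: level_gf_entry_out; move: out; rewrite intS addrC ltzD1.
Qed.

Lemma nwalks_level_origin n : nwalks_level S n.+1 0 0 = 0%N.
Proof.
rewrite S_rec // !big_cons big_nil !nwalks_level_out //.
rewrite big1_seq // => d _; apply: nwalks_level_out; rewrite sub0r.
by apply/negP => /andP[/le_trans /[apply]]; rewrite oppr_ge0 ler10.
Qed.

Lemma level_gf0 N : level_gf 0 N.+1 = 1%:M.
Proof.
apply/rowP => i; rewrite ord1 !mxE; apply/polyP => -[|n]; rewrite coef_poly coef1 //=.
  by rewrite nwalks_level0.
by rewrite nwalks_level_origin if_same.
Qed.

Lemma level_gf_truncate m N : eqmodX N (level_gf m N) (level_gf m N.+1).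
Proof.
exists (- \row_(i < m.+1) ((nwalks_level S N m i)%:R)%:P).
apply/rowP => i; apply/polyP => n; rewrite !mxE coefB !coef_poly mulrN coefN coefXnM coefC.
case: ltngtP => [lt_nN | lt_Nn | ->]; last by rewrite ltnSn subnn sub0r.
  by rewrite ltnS ltnW // subrr oppr0.
by rewrite ltnS leqNgt lt_Nn subn_eq0 leqNgt lt_Nn subrr oppr0.
Qed.

Lemma level_gf_succ m N :
  level_gf m.+1 N.+1 = 'X *: (level_gf m.+1 N *m bandmx [:: -1; 1] + level_gf m N *m bandmx s).
Proof.
apply/rowP => j; rewrite [RHS]mxE [in RHS]mxE !mul_level_gf_bandmx // mxE.
apply/polyP => -[|n]; rewrite coef_poly coefXM coefD !coef_sum //=.
  by rewrite nwalks_level0.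
under eq_bigr do rewrite coef_poly; under [X in _ + X]eq_bigr do rewrite coef_poly.
rewrite ltnS; case: ifP => lt_nN; last by rewrite !big1 ?addr0.
have j_le : 0 <= j%:Z <= m.+1 by rewrite le0z_nat lez_nat -ltnS ltn_ord.
have -> : m = (m.+1%:Z - 1)%R :> int by rewrite intS [1 + _]addrC addrK.
by rewrite S_rec // natrD !natr_sum.
Qed.

Lemma level_gf_recurrence m N :
  eqmodX N (level_gf m.+1 N *m Tpoly m.+2) ('X *: (level_gf m N *m bandmx s)).
Proof.
have [C eqC] := level_gf_truncate m.+1 N; exists C.
by rewrite -eqC level_gf_succ mulmxBr mulmx1 -scalemxAr scalerDr opprD addrA.
Qed.

Lemma level_gf_Pnum m N : eqmodX N (Pden m *: level_gf m N) (Pnum s m).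
Proof.
elim: m => [|m IHm] /=.
  by rewrite scale1r -(level_gf0 N); apply: level_gf_truncate.
have -> : Pden m * \det (Tpoly m.+2) *: level_gf m.+1 N =
          Pden m *: (level_gf m.+1 N *m Tpoly m.+2 *m \adj (Tpoly m.+2)).
  by rewrite -mulmxA mul_mx_adj mul_mx_scalar scalerA.
apply: eqmodX_trans (eqmodX_scale _ (eqmodX_mulmxr _ (level_gf_recurrence m N))) _.
rewrite -!scalemxAl scalerA mulrC -scalerA !scalemxAl.
by do 2 apply: eqmodX_mulmxr; apply: eqmodX_scale.
Qed.

Variable X : forall m, 'M[Rt R]_(m.+1, m.+2).
Hypothesis X_band : forall m, X m = map_mx (@FracField.tofrac _) (bandmx s).

Theorem Pprod_expands_to_nwalks k (i : 'I_k.+1) :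
  expands_to ((tt R ^+ k *: Pprod X k) 0 i) (fun n => (nwalks S n (k - i) i)%:R).
Proof.
exists (Pnum s k 0 i), (Pden k); split; first by rewrite coef0_Pden oner_neq0.
split; first by rewrite (Pprod_frac X_band) !mxE mulrC.
move=> n; rewrite -(coef_eqmodX 0 i (level_gf_Pnum k n.+1) (ltnSn n)) !mxE coefM.
apply: eq_bigr => j _; rewrite coef_poly ltnS leq_subr nwalksE /nwalks_level subzn //.
by rewrite -ltnS.
Qed.

End GeneratingFunction.

Unset Implicit Arguments.

(* The identities hold for k = 0 as well. *)
Theorem proposition2p10 (R : realType) (k : nat) (hk : (1 <= k)%N) :
  (forall i : 'I_k.+1,
     expands_to ((tt R ^+ k *: Pprod (@Bmx R) k) 0 i)
                (fun n => (nwalks stepsB n (k - i) i)%:R))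
  /\
  (forall i : 'I_k.+1,
     expands_to ((tt R ^+ k *: Pprod (@Dmx R) k) 0 i)
                (fun n => (nwalks stepsD n (k - i) i)%:R)).
Proof.
split=> i.
  apply: (Pprod_expands_to_nwalks (s := [:: 0; -1])) => //.
    exact: level_recurrence_stepsB.
  exact: Bmx_bandmx.
apply: (Pprod_expands_to_nwalks (s := [:: -1])) => //.
  exact: level_recurrence_stepsD.
exact: Dmx_bandmx.
Qed.
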